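(* There exists a Stackelberg game $(G,L,F)$ such that $\mathcal{X}^{PS}\not\subseteq\mathcal{X}^{CCE}$.
   Context: A finite game is $G=(N,\{S_p\}_{p\in N},\{u_p\}_{p\in N})$ with players $N=\{1,\dots,n\}$, finite nonempty strategy sets $S_p$, and utilities $u_p:S\to\mathbb{R}$ on $S=\prod_{p\in N}S_p$; write $s=(s_p,s_{-p})$ with $s_{-p}\in S_{-p}=\prod_{q\neq p}S_q$. $\mathcal{X}=\Delta(S)$ is the set of probability distributions on $S$ and $u_p(x)=\sum_{s\in S}x(s)u_p(s)$ for $x\in\mathcal{X}$. For $P\subseteq N$, $\mathcal{X}^{CE}_P$ is the set of $x\in\mathcal{X}$ such that for every $p\in P$ and all $s_p\neq s_p'\in S_p$: $\sum_{s_{-p}\in S_{-p}} x(s_p,s_{-p})\,(u_p(s_p,s_{-p})-u_p(s_p',s_{-p}))\ge 0$; $\mathcal{X}^{CE}=\mathcal{X}^{CE}_N$ is the set of correlated equilibria of $G$. $\mathcal{X}^{CCE}$ is the set of coarse correlated equilibria of $G$: $x\in\mathcal{X}$ with $\sum_{s\in S}x(s)(u_p(s)-u_p(s_p',s_{-p}))\ge 0$ for all $p\in N$, $s_p'\in S_p$. A Stackelberg game (SG) is a triple $(G,L,F)$ with $L\cup F=N$ and $L\cap F=\emptyset$ (leaders and followers). For $P\subseteq N$, $\Pi_P$ is the set of ordered subsets of $P$ (finite sequences of pairwise distinct elements of $P$, including the empty sequence $\varnothing$); for $\pi\in\Pi_P$ and $p\in P$ not occurring in $\pi$, $\pi p$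 is $\pi$ with $p$ appended; when used as a set, $\pi$ means its set of entries. $\mathbf{X}=\prod_{\pi\in\Pi_L}\mathcal{X}^{CE}_{\pi\cup F}$, with elements $\mathbf{x}=[x_\pi]_{\pi\in\Pi_L}$. For $\mathbf{x}\in\mathbf{X}$ and $\pi\in\Pi_L$, $x_\pi$ is stable if $u_p(x_\pi)\ge u_p(x_{\pi p})$ for all $p\in L\setminus\pi$; $\mathbf{x}$ is stable if $x_\varnothing$ is stable, and perfectly stable if $x_\pi$ is stable for every $\pi\in\Pi_L$; $\mathbf{X}^{S}$ and $\mathbf{X}^{PS}$ denote the sets of stable and perfectly stable elements of $\mathbf{X}$. $\mathcal{X}^S=\{x_\varnothing:\mathbf{x}\in\mathbf{X}^S\}$ and $\mathcal{X}^{PS}=\{x_\varnothing:\mathbf{x}\in\mathbf{X}^{PS}\}$ (for the given SG). *)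

From HB Require Import structures.
From mathcomp Require Import all_boot all_order all_algebra.
Set Implicit Arguments. Unset Strict Implicit. Unset Printing Implicit Defensive.
Import Order.TTheory GRing.Theory Num.Theory.
Local Open Scope ring_scope.

Definition profile (n : nat) (S : 'I_n -> finType) : finType :=
  {dffun forall p : 'I_n, S p}.

Record game (R : realFieldType) := Game {
  g_n : nat;
  g_S : 'I_g_n -> finType;
  g_Sne : forall p, (0 < #|g_S p|)%N;
  g_u : 'I_g_n -> profile g_S -> R }.
Arguments g_n {R} g.
Arguments g_S {R} g p.
Arguments g_Sne {R} g p.
Arguments g_u {R} g p s.

Section GameDefs.
Variables (R : realFieldType) (G : game R).

Local Notation N := 'I_(g_n G).
Local Notation S := (profile (g_S G)).
Local Notation u := (g_u G).

Definition deviate (s : S) (p : N) (b : g_S G p) : S :=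
  [ffun q => dfwith (fun q => s q) b q].

Definition is_dist (x : {ffun S -> R}) : Prop :=
  (forall s, 0 <= x s) /\ \sum_(s : S) x s = 1.

Definition exp_util (p : N) (x : {ffun S -> R}) : R := \sum_(s : S) x s * u p s.

(* X^CE_P: the sum over s_{-p} of x(s_p,s_{-p})(u_p(s_p,s_{-p}) - u_p(s_p',s_{-p}))
   is written as the sum over profiles s with s p = a. *)
Definition CE_P (P : {set N}) (x : {ffun S -> R}) : Prop :=
  is_dist x /\
  forall p, p \in P -> forall a b : g_S G p, a != b ->
    0 <= \sum_(s : S | s p == a) x s * (u p s - u p (deviate s b)).

Definition CCE (x : {ffun S -> R}) : Prop :=
  is_dist x /\
  forall (p : N) (b : g_S G p), 0 <= \sum_(s : S) x s * (u p s - u p (deviate s b)).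

Definition stackelberg (L F : {set N}) : Prop := L :|: F = setT /\ L :&: F = set0.

Definition ordered_subset (L : {set N}) (pi : seq N) : Prop :=
  uniq pi /\ {subset pi <= L}.

(* bold x in bold X = prod_{pi in Pi_L} X^CE_{pi u F}; represented as a function on
   sequences, only its values on Pi_L matter. *)
Definition in_bX (L F : {set N}) (xx : seq N -> {ffun S -> R}) : Prop :=
  forall pi, ordered_subset L pi -> CE_P ([set q | q \in pi] :|: F) (xx pi).

Definition stable_at (L : {set N}) (xx : seq N -> {ffun S -> R}) (pi : seq N) : Prop :=
  forall p, p \in L -> p \notin pi -> exp_util p (xx (rcons pi p)) <= exp_util p (xx pi).

Definition perfectly_stable (L : {set N}) (xx : seq N -> {ffun S -> R}) : Prop :=
  forall pi, ordered_subset L pi -> stable_at L xx pi.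

Definition in_XPS (L F : {set N}) (x : {ffun S -> R}) : Prop :=
  exists xx, [/\ in_bX L F xx, perfectly_stable L xx & xx [::] = x].

End GameDefs.

From HB Require Import structures.
From mathcomp Require Import all_boot all_order all_algebra.
From mathcomp Require Import lra.
Set Implicit Arguments. Unset Strict Implicit. Unset Printing Implicit Defensive.
Import Order.TTheory GRing.Theory Num.Theory.
Local Open Scope ring_scope.

(* All distributions used are point masses (Dirac distributions) on pure
   profiles, for which the correlated-equilibrium constraints reduce to
   "no profitable unilateral deviation".  The general part of the file shows:
   if s0 is a pure Nash equilibrium, t is a profile from which no follower
   gains by deviating, and every leader weakly prefers t to s0, then the
   point mass at t lies in X^PS (witness: x_() = delta_t and x_pi = delta_s0
   for every nonempty ordered set of leaders pi).  On the other hand a point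
   mass that is a CCE admits no profitable deviation at all.

   The theorem follows from a 2x2 game: the leader (row player) has a
   strictly dominant strategy B, the follower wants to match the leader.
   (B,r) is a Nash equilibrium with leader payoff 1, (T,l) gives the leader 2
   and is follower-stable, but the leader gains 3 by deviating from (T,l)
   to B, so delta_(T,l) is perfectly stable without being a CCE. *)

Section PointMasses.
Variables (R : realFieldType) (G : game R).

Local Notation N := 'I_(g_n G).
Local Notation S := (profile (g_S G)).
Local Notation u := (g_u G).

Definition dirac (s0 : S) : {ffun S -> R} := [ffun s => (s == s0)%:R].

Lemma sum_dirac (P : pred S) (s0 : S) (f : S -> R) :
  \sum_(s | P s) dirac s0 s * f s = if P s0 then f s0 else 0.
Proof.
have dirac_ne s : s != s0 -> dirac s0 s * f s = 0.
  by move=> /negbTE ns0; rewrite ffunE ns0 mul0r.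
case: ifP => [Ps0|nPs0].
  rewrite (bigD1 s0) //= big1 => [|s /andP[_]]; last exact: dirac_ne.
  by rewrite ffunE eqxx mul1r addr0.
by apply: big1 => s Ps; apply: dirac_ne; apply: contraFN nPs0 => /eqP <-.
Qed.

Lemma exp_util_dirac (p : N) (s0 : S) : exp_util p (dirac s0) = u p s0.
Proof. exact: (sum_dirac predT). Qed.

Lemma dirac_dist (s0 : S) : is_dist (dirac s0).
Proof.
split=> [s|]; first by rewrite ffunE ler0n.
by rewrite -[RHS](sum_dirac predT s0 (fun=> 1)); apply: eq_bigr => s _; rewrite mulr1.
Qed.

Lemma deviate_self (s : S) (p : N) (b : g_S G p) : deviate s b p = b.
Proof. by rewrite /deviate ffunE dfwith_in. Qed.

Lemma deviate_other (s : S) (p q : N) (b : g_S G p) :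
  p != q -> deviate s b q = s q.
Proof. by move=> npq; rewrite /deviate ffunE dfwith_out. Qed.

Definition no_gain_from (P : {set N}) (s0 : S) : Prop :=
  forall p, p \in P -> forall b : g_S G p, u p (deviate s0 b) <= u p s0.

(* Against a point mass, the CE_P constraint for p, a, b is either vacuous
   (s0 p != a) or says that deviating to b does not pay. *)
Lemma dirac_CE_P (P : {set N}) (s0 : S) :
  no_gain_from P s0 -> CE_P P (dirac s0).
Proof.
move=> nogain; split=> [|p pP a b _]; first exact: dirac_dist.
by rewrite sum_dirac; case: ifP => // _; rewrite subr_ge0 nogain.
Qed.

Lemma dirac_CCE_no_gain (s0 : S) : CCE (dirac s0) -> no_gain_from setT s0.
Proof. by case=> _ cce p _ b; move: (cce p b); rewrite (sum_dirac predT) subr_ge0. Qed.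

(* Stability at a nonempty pi is trivial, and at the
   empty sequence it is the leaders' preference for t over s0. *)
Lemma dirac_in_XPS (L F : {set N}) (s0 t : S) :
  no_gain_from setT s0 -> no_gain_from F t ->
  (forall p, p \in L -> u p s0 <= u p t) ->
  in_XPS L F (dirac t).
Proof.
move=> nash_s0 follow_t prefer_t.
exists (fun pi => if pi is [::] then dirac t else dirac s0); split=> //.
- move=> [|q pi] _ /=; apply: dirac_CE_P => p pP b.
    by apply: follow_t; move: pP; rewrite !inE.
  exact: nash_s0.
- move=> [|q pi] _ p pL _ /=; last exact: lexx.
  by rewrite !exp_util_dirac prefer_t.
Qed.

End PointMasses.

(* The example: a 2x2 game between a leader choosing T (true) or B (false)
   and a follower choosing l (true) or r (false). *)
Definition leader : 'I_2 := ord0.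
Definition follower : 'I_2 := ord_max.

Lemma players_2 (p : 'I_2) : p = leader \/ p = follower.
Proof. by case: p => [[|[|]]] // lt_p2; [left | right]; apply: val_inj. Qed.

Definition ex_S : 'I_2 -> finType := fun=> bool.

Lemma ex_S_nonempty (p : 'I_2) : (0 < #|ex_S p|)%N.
Proof. by rewrite card_bool. Qed.

(* The leader gets 1 for playing B plus 2 if the follower plays l, so B is
   strictly dominant for her; the follower gets 1 for matching the leader. *)
Definition ex_u (R : realFieldType) (p : 'I_2) (s : profile ex_S) : R :=
  if p == leader then (~~ s leader)%:R + 2 * (s follower : bool)%:R
  else (s leader == s follower)%:R.

Definition ex_game (R : realFieldType) : game R :=
  @Game R 2 ex_S ex_S_nonempty (@ex_u R).

Definition pure (a c : bool) : profile ex_S :=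
  [ffun p => (if p == leader then a else c : ex_S p)].

Lemma ex_stackelberg (R : realFieldType) :
  stackelberg (G := ex_game R) [set leader] [set follower].
Proof. by split; apply/setP => p; rewrite !inE; case: (players_2 p) => ->. Qed.

Lemma ex_u_deviate (R : realFieldType) (p : 'I_2) (a c b : bool) :
  g_u (ex_game R) p (deviate (G := ex_game R) (pure a c) (p := p) b) =
  if p == leader then ex_u R leader (pure b c) else ex_u R follower (pure a b).
Proof.
by rewrite /= /ex_u; case: (players_2 p) => ->;
  rewrite (@deviate_self _ (ex_game R)) (@deviate_other _ (ex_game R)) // !ffunE.
Qed.

Lemma ex_nash (R : realFieldType) :
  no_gain_from (G := ex_game R) setT (pure false false).
Proof.
move=> p _ b; rewrite ex_u_deviate /= /ex_u.
by case: (players_2 p) => ->; rewrite /= !ffunE /=; case: b => /=; lra.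
Qed.

(* At (T, l) the follower matches the leader, so she cannot gain ... *)
Lemma ex_follower_stable (R : realFieldType) :
  no_gain_from (G := ex_game R) [set follower] (pure true true).
Proof.
move=> p; rewrite inE => /eqP -> b; rewrite ex_u_deviate /= /ex_u.
by rewrite !ffunE /=; case: b => /=; lra.
Qed.

Lemma ex_leader_prefers (R : realFieldType) (p : 'I_2) :
  p \in [set leader] ->
  g_u (ex_game R) p (pure false false) <= g_u (ex_game R) p (pure true true).
Proof. by rewrite inE => /eqP ->; rewrite /= /ex_u !ffunE /=; lra. Qed.

Lemma ex_leader_deviates (R : realFieldType) :
  ~ no_gain_from (G := ex_game R) setT (pure true true).
Proof.
move=> /(_ leader (in_setT _) false); rewrite ex_u_deviate /= /ex_u !ffunE /=; lra.
Qed.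

Theorem mainTheorem13 (R : realFieldType) :
  exists (G : game R) (L F : {set 'I_(g_n G)}),
    stackelberg L F /\
    exists x : {ffun profile (g_S G) -> R}, in_XPS L F x /\ ~ CCE x.
Proof.
exists (ex_game R), [set leader], [set follower]; split; first exact: ex_stackelberg.
exists (dirac (G := ex_game R) (pure true true)); split.
  apply: (dirac_in_XPS (G := ex_game R) (s0 := pure false false)).
  - exact: ex_nash.
  - exact: ex_follower_stable.
  - exact: ex_leader_prefers.
by move/dirac_CCE_no_gain; apply: ex_leader_deviates.
Qed.
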